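(* Let $n\ge 6$ and let $T$ be a tree on $n$ vertices with maximum degree $n-3$. Then $\rho_{ABC}(T)<\sqrt{n-3.5}$.
   Context: For a simple connected graph $G$ with vertex set $\{v_1,\dots,v_n\}$ and degrees $d_i$, the ABC matrix is $M(G)=(m_{ij})_{n\times n}$ with $m_{ij}=\sqrt{(d_i+d_j-2)/(d_id_j)}$ if $v_iv_j$ is an edge and $m_{ij}=0$ otherwise. The ABC spectral radius $\rho_{ABC}(G)$ is the largest eigenvalue of $M(G)$. (The paper states this for its three trees $T_2,T_3,T_4$, which are exactly the trees on $n$ vertices with maximum degree $n-3$: a vertex of degree $n-3$ together with two further vertices attached either as two leaves at one neighbor, as leaves at two distinct neighbors, or as a path of length two hanging from one neighbor.) *)

From mathcomp Require Import all_boot all_order all_algebra.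
From mathcomp Require Import reals.
Set Implicit Arguments. Unset Strict Implicit. Unset Printing Implicit Defensive.
Import Order.TTheory GRing.Theory Num.Theory.
Local Open Scope ring_scope.

Definition simple_graph (n : nat) (e : rel 'I_n) : Prop :=
  symmetric e /\ irreflexive e.

Definition deg (n : nat) (e : rel 'I_n) (i : 'I_n) : nat := #|[set j | e i j]|.

Definition nedges (n : nat) (e : rel 'I_n) : nat :=
  #|[set p : 'I_n * 'I_n | e p.1 p.2 && (p.1 < p.2)%N]|.

Definition connected_graph (n : nat) (e : rel 'I_n) : Prop :=
  forall x y : 'I_n, connect e x y.

Definition is_tree (n : nat) (e : rel 'I_n) : Prop :=
  [/\ simple_graph e, connected_graph e & nedges e = n.-1].

Definition max_deg (n : nat) (e : rel 'I_n) : nat := \max_(i : 'I_n) deg e i.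

Definition ABC_matrix (R : realType) (n : nat) (e : rel 'I_n) : 'M[R]_n :=
  \matrix_(i < n, j < n)
    if e i j then
      Num.sqrt (((deg e i)%:R + (deg e j)%:R - 2) / ((deg e i)%:R * (deg e j)%:R))
    else 0.

From mathcomp Require Import all_boot all_order all_algebra.
From mathcomp Require Import reals.
From mathcomp Require Import zify ring lra.
Import Order.TTheory GRing.Theory Num.Theory.

Set Implicit Arguments.
Unset Strict Implicit.
Unset Printing Implicit Defensive.

(* If v M = a v and g > 0 is any vertex weight, Cauchy-Schwarz applied to each
   coordinate (a v_j = sum_(k ~ j) M_kj v_k) gives
     (a v_j)^2 <= W_j * sum_(k ~ j) v_k^2 / g_k,  W_j = sum_(l ~ j) M_lj^2 g_l,
   and summing over j yields a^2 <= max_k g_k^-1 sum_(j ~ k) W_j.  Take g = 1,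
   3/2, 9/4 on vertices of degree 1, 2, >= 3.  In a tree on n vertices with a
   vertex c of degree n - 3 the excesses deg v - 1 of the vertices v <> c add
   up to 2, so these vertices have degree at most 3 and only a few local
   configurations occur around any vertex; in each of them the row bound
   g_k^-1 sum_(j ~ k) W_j is below n - 7/2. *)

Section Graphs.
Variables (n : nat) (e : rel 'I_n).

Definition nbr (v : 'I_n) : {set 'I_n} := [set w | e v w].

Lemma in_nbr v w : (w \in nbr v) = e v w.
Proof. by rewrite inE. Qed.

Lemma card_nbr v : #|nbr v| = deg e v.
Proof. by []. Qed.

Lemma deg_sum : simple_graph e -> \sum_v deg e v = (nedges e).*2.
Proof.
case=> e_sym e_irr.
have deg_split v : deg e v = \sum_j (e v j && (v < j)%N) + \sum_j (e v j && (j < v)%N).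
  rewrite -big_split /= /deg cardsE -sum1_card big_mkcond /=.
  apply: eq_bigr => j _; rewrite unfold_in.
  by case: ltngtP => [_|_|/val_inj->]; rewrite ?andbF ?andbT ?e_irr; case: (e v j).
have -> : nedges e = \sum_v \sum_j (e v j && (v < j)%N).
  rewrite /nedges cardsE -sum1_card big_mkcond /= pair_big /=.
  by apply: eq_bigr => -[v j] _.
rewrite (eq_bigr _ (fun v _ => deg_split v)) big_split /= -addnn; congr (_ + _).
by rewrite exchange_big; apply: eq_bigr => v _; apply: eq_bigr => j _; rewrite e_sym.
Qed.

Lemma connected_closed_setT (S : {set 'I_n}) x :
  symmetric e -> connected_graph e -> x \in S ->
  (forall u w, u \in S -> e u w -> w \in S) -> S = setT.
Proof.
move=> e_sym e_conn xS S_closed.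
have S_closed' : closed e (mem S).
  move=> u w euw; apply/idP/idP => [uS|wS]; first exact: S_closed uS euw.
  by apply: (S_closed w) => //; rewrite e_sym.
by apply/setP => y; rewrite inE -(closed_connect S_closed' (e_conn x y)).
Qed.

Lemma deg_gt0 v : (1 < n)%N -> simple_graph e -> connected_graph e -> (0 < deg e v)%N.
Proof.
move=> n_gt1 [e_sym _] e_conn; rewrite lt0n; apply/negP => /eqP/cards0_eq nbr_v0.
suff v_all : [set v] = setT by have := cards1 v; rewrite v_all cardsT card_ord; lia.
apply: (connected_closed_setT (x := v)) => // [|u w]; first by rewrite inE.
by rewrite inE => /eqP-> evw; have := in_nbr v w; rewrite /nbr nbr_v0 inE evw.
Qed.

Lemma tree_excess_sum c : (1 < n)%N -> is_tree e ->
  (\sum_(v | v != c) (deg e v).-1 + deg e c)%N = n.-1.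
Proof.
move=> n_gt1 [e_simple e_conn e_size].
have := deg_sum e_simple; rewrite e_size (bigD1 c) //=.
rewrite (eq_bigr (fun v => (deg e v).-1 + 1)%N); last first.
  by move=> v _; rewrite addn1 prednK // deg_gt0.
rewrite big_split /= sum1_card cardC1 card_ord; lia.
Qed.

Lemma max_deg_attained : (0 < n)%N -> exists c, deg e c = max_deg e.
Proof.
move=> n_gt0; have [|c max_c] := @bigop.eq_bigmax _ (deg e); first by rewrite card_ord.
by exists c; rewrite /max_deg max_c.
Qed.

End Graphs.

Local Open Scope ring_scope.

Section WeightedSpectralBound.
Variable R : realFieldType.

Lemma weighted_cauchy_schwarz (I : finType) (P : pred I) (x y g : I -> R) :
  (forall k, P k -> 0 < g k) ->
  (\sum_(k | P k) x k * y k) ^+ 2 <=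
    (\sum_(k | P k) x k ^+ 2 * g k) * (\sum_(k | P k) y k ^+ 2 / g k).
Proof.
move=> g_gt0; set a := fun k => x k ^+ 2 * g k; set b := fun k => y k ^+ 2 / g k.
set p := fun k => x k * y k.
(* Lagrange's identity, with the weights moved inside the squares *)
have lagrange k l : P k -> P l ->
    (x k * g k * y l - x l * g l * y k) ^+ 2 / (g k * g l) =
    a k * b l + a l * b k - 2 * (p k * p l).
  move=> Pk Pl; have := g_gt0 k Pk; have := g_gt0 l Pl; rewrite /a /b /p => gl gk.
  by field; rewrite !gt_eqF.
have : 0 <= \sum_(k | P k) \sum_(l | P l)
              (x k * g k * y l - x l * g l * y k) ^+ 2 / (g k * g l).
  apply: sumr_ge0 => i Pi; apply: sumr_ge0 => j Pj.
  by rewrite divr_ge0 ?sqr_ge0 // ltW // mulr_gt0 ?g_gt0.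
rewrite (eq_bigr (fun k => a k * \sum_(l | P l) b l + (\sum_(l | P l) a l) * b k
                           - 2 * p k * \sum_(l | P l) p l)); last first.
  move=> k Pk; rewrite mulr_sumr mulr_suml mulr_sumr -big_split -sumrB /=.
  by apply: eq_bigr => l Pl; rewrite lagrange // mulrA.
rewrite sumrB big_split /= -!mulr_suml -!mulr_sumr.
rewrite [_ ^+ 2]expr2 -/(\sum_(k | P k) a k) -/(\sum_(k | P k) b k) -/(\sum_(k | P k) p k).
lra.
Qed.

Definition col_mass n (A : 'M[R]_n) (g : 'I_n -> R) (j : 'I_n) : R :=
  \sum_l A l j ^+ 2 * g l.

Section EigenvectorBound.
Variables (n : nat) (A : 'M[R]_n) (N : 'I_n -> {set 'I_n}) (g : 'I_n -> R).
Hypotheses (A_supp : forall k j, j \notin N k -> A k j = 0) (g_gt0 : forall k, 0 < g k).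

Let row_bound k := (g k)^-1 * \sum_(j in N k) col_mass A g j.

Lemma eigenvector_sqr_sum_le a (v : 'rV[R]_n) : v *m A = a *: v ->
  a ^+ 2 * \sum_j v 0 j ^+ 2 <= \sum_k v 0 k ^+ 2 * row_bound k.
Proof.
move=> vA; have sum_supp (F : 'I_n -> R) j : (forall k, A k j = 0 -> F k = 0) ->
    \sum_k F k = \sum_(k | j \in N k) F k.
  move=> F0; rewrite (bigID (fun k => j \in N k)) /= [X in _ + X]big1 ?addr0 //.
  by move=> k /A_supp /F0.
have col_le j : (a * v 0 j) ^+ 2 <=
    col_mass A g j * \sum_(k | j \in N k) v 0 k ^+ 2 / g k.
  have -> : a * v 0 j = \sum_k A k j * v 0 k.
    have := congr1 (fun M : 'rV_n => M 0 j) vA; rewrite !mxE => <-.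
    by apply: eq_bigr => k _; rewrite mulrC.
  rewrite /col_mass !(sum_supp _ j) => [|k ->|k ->]; rewrite ?expr0n ?mul0r //.
  exact: weighted_cauchy_schwarz.
rewrite mulr_sumr (eq_bigr (fun j => (a * v 0 j) ^+ 2)) => [|j _]; last by rewrite exprMn.
apply: le_trans (ler_sum _ (fun j _ => col_le j)) _.
under eq_bigr do rewrite mulr_sumr.
rewrite (exchange_big_dep xpredT) //=; apply: ler_sum => k _.
rewrite /row_bound mulrA mulr_sumr; apply: ler_sum => j _.
by rewrite mulrC.
Qed.

Lemma eigenvalue_sqr_lt (B a : R) :
  (forall k, row_bound k < B) -> eigenvalue A a -> a ^+ 2 < B.
Proof.
move=> row_lt /eigenvalueP[v /eigenvector_sqr_sum_le sum_le v_neq0].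
have [k0 vk0] : exists k, v 0 k != 0.
  apply/existsP; apply: contraR v_neq0 => /existsPn v0.
  by apply/eqP/rowP => k; rewrite mxE; apply/eqP/negPn/v0.
have vk0_gt0 : 0 < v 0 k0 ^+ 2 by rewrite exprn_even_gt0 //= vk0.
have norm_gt0 : 0 < \sum_k v 0 k ^+ 2.
  rewrite (bigD1 k0) //=; have : 0 <= \sum_(k | k != k0) v 0 k ^+ 2.
    by apply: sumr_ge0 => k _; exact: sqr_ge0.
  lra.
rewrite -(ltr_pM2r norm_gt0); apply: le_lt_trans sum_le _; rewrite mulr_sumr.
rewrite [ltRHS](bigD1 k0) // [ltLHS](bigD1 k0) //= ltr_leD //.
  by rewrite mulrC ltr_pM2r ?row_lt.
by apply: ler_sum => k _; rewrite mulrC ler_wpM2r ?sqr_ge0 // ltW.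
Qed.

End EigenvectorBound.

End WeightedSpectralBound.

Section SumBounds.
Context {R : realFieldType} {I : finType}.

Lemma sum_le_card (A : {set I}) (f : I -> R) B :
  (forall k, k \in A -> f k <= B) -> \sum_(k in A) f k <= #|A|%:R * B.
Proof. by move=> f_le; apply: le_trans (ler_sum _ f_le) _; rewrite sumr_const mulr_natl. Qed.

Lemma sum_le_but_one (A : {set I}) (f : I -> R) c B :
  c \in A -> (forall k, k \in A -> k != c -> f k <= B) ->
  \sum_(k in A) f k <= (#|A|%:R - 1) * B + f c.
Proof.
move=> cA f_le; rewrite (bigD1 c) //= addrC lerD2r (cardsD1 c A) cA natrD addrAC subrr add0r.
rewrite (eq_bigl (fun k => k \in A :\ c)) => [|k]; last by rewrite in_setD1 andbC.
by apply: sum_le_card => k; rewrite in_setD1 => /andP[kc kA]; apply: f_le.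
Qed.

Lemma sum_le_but_one_max (A : {set I}) (f : I -> R) c B Bc :
  (0 < #|A|)%N -> B <= Bc -> (c \in A -> f c <= Bc) ->
  (forall k, k \in A -> k != c -> f k <= B) ->
  \sum_(k in A) f k <= (#|A|%:R - 1) * B + Bc.
Proof.
move=> A_gt0 B_le fc_le f_le; have [cA|cNA] := boolP (c \in A).
  by apply: le_trans (sum_le_but_one cA f_le) _; rewrite lerD2l fc_le.
apply: le_trans (sum_le_card (B := B) _) _.
  by move=> k kA; apply: f_le => //; apply: contraNneq cNA => <-.
have : 1 <= #|A|%:R :> R by rewrite ler1n.
nra.
Qed.

End SumBounds.

Section ABCWeights.
Context {R : realFieldType}.

Definition abc_sq (b a : nat) : R := (b%:R + a%:R - 2) / (b%:R * a%:R).

(* With constant weights the row bound at the centre exceeds n - 7/2 when both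
   extra vertices hang at the same neighbour of the centre; weights increasing
   with the degree shift the mass towards the centre. *)
Definition abc_weight (d : nat) : R :=
  match d with 1 => 1 | 2 => 3 / 2 | _ => 9 / 4 end.

Lemma abc_sqC b a : abc_sq b a = abc_sq a b.
Proof. by rewrite /abc_sq (addrC b%:R) (mulrC b%:R). Qed.

Lemma abc_sq1 a : (0 < a)%N -> abc_sq 1 a = 1 - a%:R^-1.
Proof. by move=> a_gt0; rewrite /abc_sq; field; rewrite pnatr_eq0 -lt0n. Qed.

Lemma abc_sq2 a : (0 < a)%N -> abc_sq 2 a = 1 / 2.
Proof. by move=> a_gt0; rewrite /abc_sq; field; rewrite pnatr_eq0 -lt0n. Qed.

Lemma abc_sq3 a : (0 < a)%N -> abc_sq 3 a = (1 + a%:R^-1) / 3.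
Proof. by move=> a_gt0; rewrite /abc_sq; field; rewrite pnatr_eq0 -lt0n. Qed.

Lemma abc_sq_ge0 b a : (0 < b)%N -> (0 < a)%N -> 0 <= abc_sq b a.
Proof.
rewrite -!(ler1n R) => b_ge1 a_ge1; rewrite /abc_sq divr_ge0 //; nra.
Qed.

Lemma abc_sq_le1 b a : (0 < b)%N -> (0 < a)%N -> abc_sq b a <= 1.
Proof.
rewrite -!(ler1n R) => b_ge1 a_ge1; rewrite /abc_sq ler_pdivrMr ?mul1r; nra.
Qed.

Lemma abc_weight_ge3 d : (3 <= d)%N -> abc_weight d = 9 / 4.
Proof. by case: d => [|[|[|d]]]. Qed.

Lemma abc_weight_gt0 d : 0 < abc_weight d.
Proof. by case: d => [|[|[|d]]] /=; lra. Qed.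

Lemma abc_weight_le d : abc_weight d <= 9 / 4.
Proof. by case: d => [|[|[|d]]] /=; lra. Qed.

End ABCWeights.

Definition abc_term {R : realFieldType} n (e : rel 'I_n) (l j : 'I_n) : R :=
  abc_sq (deg e l) (deg e j) * abc_weight (deg e l).

Definition abc_load {R : realFieldType} n (e : rel 'I_n) (j : 'I_n) : R :=
  \sum_(l in nbr e j) abc_term e l j.

Definition abc_row_load {R : realFieldType} n (e : rel 'I_n) (k : 'I_n) : R :=
  (abc_weight (deg e k))^-1 * \sum_(j in nbr e k) abc_load e j.

Lemma col_mass_ABC (R : realType) n (e : rel 'I_n) j :
  symmetric e -> (forall v, 0 < deg e v)%N ->
  col_mass (ABC_matrix R e) (abc_weight \o deg e) j = abc_load e j.
Proof.
move=> e_sym deg_gt0; rewrite /col_mass /abc_load [RHS]big_mkcond; apply: eq_bigr => l _ /=.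
rewrite mxE in_nbr (e_sym j); case: (e l j); last by rewrite expr0n mul0r.
by rewrite sqr_sqrtr // abc_sq_ge0.
Qed.

Section NearStarTree.
Variables (n : nat) (e : rel 'I_n) (c : 'I_n).
Hypotheses (n_ge6 : (6 <= n)%N) (e_tree : is_tree e) (deg_c : deg e c = (n - 3)%N).

Let e_sym : symmetric e. Proof. by case: e_tree => -[]. Qed.
Let e_irr : irreflexive e. Proof. by case: e_tree => -[]. Qed.
Let n_gt1 : (1 < n)%N. Proof. by apply: leq_trans n_ge6. Qed.

Lemma edge_neq u w : e u w -> u != w.
Proof. by apply: contraTneq => ->; rewrite e_irr. Qed.

Lemma tree_deg_gt0 v : (0 < deg e v)%N.
Proof. by case: e_tree => e_simple e_conn _; apply: deg_gt0. Qed.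

Lemma excess_le (S : {set 'I_n}) : c \notin S -> (\sum_(v in S) (deg e v).-1 <= 2)%N.
Proof.
move=> cNS; have := tree_excess_sum c n_gt1 e_tree; rewrite deg_c.
have : (\sum_(v in S) (deg e v).-1 <= \sum_(v | v != c) (deg e v).-1)%N.
  apply: (sub_le_big leqnn (fun x y => leq_addr y x)) => v vS.
  by apply: contraNneq cNS => <-.
lia.
Qed.

Lemma excess2 u v : u != c -> v != c -> u != v -> ((deg e u).-1 + (deg e v).-1 <= 2)%N.
Proof.
move=> uc vc uv; have := @excess_le [set u; v].
by rewrite big_setU1 ?big_set1 ?inE //=; apply; rewrite negb_or !(eq_sym c) uc vc.
Qed.

Lemma excess3 u v w : u != c -> v != c -> w != c -> u != v -> u != w -> v != w ->
  ((deg e u).-1 + (deg e v).-1 + (deg e w).-1 <= 2)%N.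
Proof.
move=> uc vc wc uv uw vw.
have := @excess_le [set u; v; w]; rewrite !inE !negb_or !(eq_sym c) uc vc wc => /(_ isT).
by rewrite -setUA big_setU1 ?big_setU1 ?big_set1 /= ?addnA // !inE ?negb_or ?uv ?uw.
Qed.

Lemma deg_le3 v : v != c -> (deg e v <= 3)%N.
Proof. by move=> vc; have := @excess_le [set v]; rewrite big_set1 inE eq_sym vc; lia. Qed.

Lemma nbr_eq v (T : {set 'I_n}) : T \subset nbr e v -> (deg e v <= #|T|)%N -> nbr e v = T.
Proof. by move=> sub card_le; apply/esym/eqP; rewrite eqEcard sub card_nbr. Qed.

Lemma no_deg2_triangle i j : e c i -> e c j -> e i j ->
  deg e i = 2%N -> deg e j = 2%N -> False.
Proof.
move=> eci ecj eij deg_i deg_j.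
have [ci cj ij] := And3 (edge_neq eci) (edge_neq ecj) (edge_neq eij).
(* Otherwise [c] and its neighbours would form a whole component, of n - 2 vertices. *)
pose S := c |: nbr e c.
suff S_all : S = setT.
  by have := cardsU1 c (nbr e c); rewrite -/S S_all cardsT card_ord in_nbr e_irr card_nbr deg_c; lia.
case: e_tree => _ e_conn _; apply: (connected_closed_setT (x := c)) => //.
  by rewrite !inE eqxx.
move=> u w; rewrite !inE => /predU1P[-> ->|ecu euw]; first by rewrite orbT.
have nbr_i : nbr e i = [set c; j].
  apply: nbr_eq; last by rewrite cards2 cj deg_i.
  by apply/subsetP => k; rewrite !inE => /pred2P[]->; rewrite // e_sym.
have nbr_j : nbr e j = [set c; i].
  apply: nbr_eq; last by rewrite cards2 ci deg_j.
  by apply/subsetP => k; rewrite !inE => /pred2P[]->; rewrite // e_sym.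
have [uE|ui] := eqVneq u i.
  by move: euw; rewrite uE -in_nbr nbr_i !inE => /pred2P[]->; rewrite ?eqxx ?ecj ?orbT.
have [uE|uj] := eqVneq u j.
  by move: euw; rewrite uE -in_nbr nbr_j !inE => /pred2P[]->; rewrite ?eqxx ?eci ?orbT.
(* the excesses of [i] and [j] exhaust the budget, so [u] is a leaf at [c] *)
have u_leaf : deg e u = 1%N.
  have cu := edge_neq ecu.
  have : ((deg e i).-1 + (deg e j).-1 + (deg e u).-1 <= 2)%N by apply: excess3; rewrite // eq_sym.
  by rewrite deg_i deg_j; have := tree_deg_gt0 u; lia.
have nbr_u : nbr e u = [set c].
  by apply: nbr_eq; [rewrite sub1set in_nbr e_sym | rewrite cards1 u_leaf].
by move: euw; rewrite -in_nbr nbr_u inE => /eqP->; rewrite eqxx.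
Qed.

Lemma deg_cases v : v != c -> [\/ deg e v = 1, deg e v = 2 | deg e v = 3]%N.
Proof.
move=> vc; move: (tree_deg_gt0 v) (deg_le3 vc).
by case: (deg e v) => [|[|[|[|d]]]] // _ _; [constructor 1 | constructor 2 | constructor 3].
Qed.

Lemma deg2_nbr_le2 j k : j != c -> deg e j = 2%N -> e j k -> k != c -> (deg e k <= 2)%N.
Proof. by move=> jc deg_j ejk kc; have := excess2 jc kc (edge_neq ejk); rewrite deg_j; lia. Qed.

Lemma deg3_nbr_leaf j k : j != c -> deg e j = 3%N -> e j k -> k != c -> deg e k = 1%N.
Proof.
move=> jc deg_j ejk kc; have := excess2 jc kc (edge_neq ejk); rewrite deg_j.
by have := tree_deg_gt0 k; lia.
Qed.

Lemma leaf_nbr j i : deg e j = 1%N -> e j i -> nbr e j = [set i].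
Proof. by move=> deg_j eji; apply: nbr_eq; rewrite ?sub1set ?in_nbr ?cards1 ?deg_j. Qed.

Variable R : realFieldType.

Local Notation D := ((n - 3)%:R : R).
Local Notation t := ((n - 3)%:R^-1 : R).
Local Notation W := (@abc_load R n e).

Let n3_gt0 : (0 < n - 3)%N. Proof. lia. Qed.
Let D_ge3 : 3 <= D. Proof. by rewrite (ler_nat R 3); lia. Qed.
Let Dt : D * t = 1. Proof. by rewrite mulfV // gt_eqF //; have := D_ge3; lra. Qed.
Let t_gt0 : 0 < t. Proof. by rewrite invr_gt0; have := D_ge3; lra. Qed.
Let t_le : t <= 1 / 3.
Proof.
have : 0 <= (D - 3) * t by rewrite mulr_ge0 ?subr_ge0 ?D_ge3 ?ltW ?t_gt0.
by rewrite mulrBl Dt; lra.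
Qed.

Lemma abc_term_center j : abc_term e c j = 9 / 4 * abc_sq (deg e j) (n - 3) :> R.
Proof. by rewrite /abc_term deg_c abc_sqC mulrC abc_weight_ge3 //; lia. Qed.

Lemma abc_load_leaf j i : deg e j = 1%N -> e j i -> W j = abc_term e i j :> R.
Proof. by move=> deg_j eji; rewrite /abc_load (leaf_nbr deg_j eji) big_set1. Qed.

Lemma abc_load_center : W c <= D - 2 / 3.
Proof.
have term_le k : k \in nbr e c -> abc_term e k c <= 1 - t + ((deg e k).-1)%:R / 6.
  rewrite in_nbr => eck; have kc : k != c by rewrite eq_sym edge_neq.
  rewrite /abc_term deg_c; have := t_le.
  by case: (deg_cases kc) => ->;
    rewrite ?(abc_sq1 n3_gt0) ?(abc_sq2 n3_gt0) ?(abc_sq3 n3_gt0) /=; lra.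
apply: le_trans (ler_sum _ term_le) _.
rewrite big_split /= sumr_const card_nbr deg_c -mulr_suml -natr_sum.
rewrite -[_ *+ (n - 3)]mulr_natr mulrBl mul1r mulrC Dt.
have : (\sum_(k in nbr e c) (deg e k).-1 <= 2)%N by apply: excess_le; rewrite in_nbr e_irr.
rewrite -(ler_nat R); lra.
Qed.

Lemma abc_term_le l j : abc_term e l j <= 9 / 4 :> R.
Proof.
rewrite /abc_term; have := abc_sq_le1 (R := R) (tree_deg_gt0 l) (tree_deg_gt0 j).
have := abc_sq_ge0 (R := R) (tree_deg_gt0 l) (tree_deg_gt0 j).
have := abc_weight_le (R := R) (deg e l); have := abc_weight_gt0 (R := R) (deg e l); nra.
Qed.

Lemma abc_term_deg2 l j : deg e j = 2%N -> abc_term e l j = abc_weight (deg e l) / 2 :> R.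
Proof. by move=> deg_j; rewrite /abc_term deg_j abc_sqC abc_sq2 ?tree_deg_gt0 // mul1r mulrC. Qed.

Lemma abc_load_nbr_center j : e c j -> W j <= 9 / 4 * (1 - t) + ((deg e j).-1)%:R / 2.
Proof.
move=> ecj; have jc : j != c by rewrite eq_sym edge_neq.
have tle := t_le; have tgt0 := t_gt0.
have c_nbr : c \in nbr e j by rewrite in_nbr e_sym.
rewrite /abc_load; case: (deg_cases jc) => deg_j.
- rewrite (leaf_nbr deg_j (_ : e j c)) -?in_nbr // big_set1.
  by rewrite abc_term_center deg_j (abc_sq1 n3_gt0) /=; lra.
- apply: le_trans (sum_le_but_one (B := 3 / 4 : R) c_nbr _) _.
    move=> k; rewrite in_nbr => ejk kc; have := deg2_nbr_le2 jc deg_j ejk kc.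
    rewrite abc_term_deg2 //; have := tree_deg_gt0 k.
    by case: (deg e k) => [|[|[|]]] //= _ _; lra.
  by rewrite card_nbr abc_term_center deg_j (abc_sq2 n3_gt0) /=; lra.
- apply: le_trans (sum_le_but_one (B := 2 / 3 : R) c_nbr _) _.
    move=> k; rewrite in_nbr => ejk kc.
    by rewrite /abc_term deg_j (deg3_nbr_leaf jc deg_j ejk kc) /abc_sq /=; lra.
  by rewrite card_nbr abc_term_center deg_j (abc_sq3 n3_gt0) /=; lra.
Qed.

Lemma abc_load_le j : W j <= D - 2 / 3.
Proof.
have [->|jc] := eqVneq j c; first exact: abc_load_center.
have tle := t_le; have D3 := D_ge3.
suff : W j <= 7 / 3 by lra.
rewrite /abc_load; case: (deg_cases jc) => deg_j.
- apply: le_trans (sum_le_card (B := 9 / 4 : R) (fun l _ => abc_term_le l j)) _.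
  by rewrite card_nbr deg_j; lra.
- apply: le_trans (sum_le_card (B := 9 / 8 : R) _) _; last by rewrite card_nbr deg_j; lra.
  by move=> l _; rewrite abc_term_deg2 //; have := abc_weight_le (R := R) (deg e l); lra.
- apply: le_trans (sum_le_but_one_max (c := c) (B := 2 / 3 : R) (Bc := 1) _ _ _ _) _.
  + by rewrite card_nbr deg_j.
  + lra.
  + by rewrite abc_term_center deg_j (abc_sq3 n3_gt0); lra.
  + move=> k; rewrite in_nbr => ejk kc.
    by rewrite /abc_term deg_j (deg3_nbr_leaf jc deg_j ejk kc) /abc_sq /=; lra.
  + by rewrite card_nbr deg_j; lra.
Qed.

Lemma abc_load_deg2_nbr i j : i != c -> deg e i = 2%N -> e i j -> j != c ->
  W j <= 3 / 4 + 9 / 8 * ((deg e j).-1)%:R.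
Proof.
move=> ic deg_i eij jc; have i_nbr : i \in nbr e j by rewrite in_nbr e_sym.
have := deg2_nbr_le2 ic deg_i eij jc; case: (deg_cases jc) => deg_j; rewrite deg_j // => _.
- by rewrite (abc_load_leaf deg_j (_ : e j i)) -?in_nbr // /abc_term deg_i deg_j /abc_sq /=; lra.
- rewrite /abc_load; apply: le_trans (sum_le_but_one (B := 9 / 8 : R) i_nbr _) _.
    by move=> l _ _; rewrite abc_term_deg2 //; have := abc_weight_le (R := R) (deg e l); lra.
  by rewrite card_nbr deg_j abc_term_deg2 // deg_i /=; lra.
Qed.

Lemma abc_load_deg2_nbr_center i j : e c i -> deg e i = 2%N -> e i j -> j != c ->
  W j <= 5 / 4.
Proof.
move=> eci deg_i eij jc; have ic : i != c by rewrite eq_sym edge_neq.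
have i_nbr : i \in nbr e j by rewrite in_nbr e_sym.
have := deg2_nbr_le2 ic deg_i eij jc; case: (deg_cases jc) => deg_j; rewrite deg_j // => _.
- by rewrite (abc_load_leaf deg_j (_ : e j i)) -?in_nbr // /abc_term deg_i deg_j /abc_sq /=; lra.
rewrite /abc_load; apply: le_trans (sum_le_but_one (B := 1 / 2 : R) i_nbr _) _.
  move=> k; rewrite in_nbr => ejk ki.
  have kc : k != c.
    apply: contraTneq ejk => ->; apply/negP; rewrite e_sym => ecj.
    exact: no_deg2_triangle eci ecj eij deg_i deg_j.
  (* [i] and [j] have used up the excess, so [k] is a leaf *)
  have : ((deg e i).-1 + (deg e j).-1 + (deg e k).-1 <= 2)%N.
    by apply: excess3; rewrite // ?(edge_neq eij) ?(edge_neq ejk) // eq_sym.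
  rewrite deg_i deg_j => k_excess; have k_gt0 := tree_deg_gt0 k.
  have k_leaf : deg e k = 1%N by lia.
  by rewrite /abc_term k_leaf deg_j /abc_sq /=; lra.
by rewrite card_nbr deg_j abc_term_deg2 // deg_i /=; lra.
Qed.

Local Notation row_load := (@abc_row_load R n e).

Lemma abc_row_load_center : row_load c < D - 1 / 2.
Proof.
have tgt0 := t_gt0.
have : \sum_(j in nbr e c) W j <=
       \sum_(j in nbr e c) (9 / 4 * (1 - t) + ((deg e j).-1)%:R / 2).
  by apply: ler_sum => j; rewrite in_nbr; apply: abc_load_nbr_center.
rewrite big_split /= sumr_const card_nbr deg_c -mulr_suml -natr_sum.
rewrite -[_ *+ (n - 3)]mulr_natr -(mulrA (9 / 4)) mulrBl mul1r [t * _]mulrC Dt.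
have : (\sum_(k in nbr e c) (deg e k).-1 <= 2)%N by apply: excess_le; rewrite in_nbr e_irr.
rewrite -(ler_nat R) /abc_row_load deg_c abc_weight_ge3; last lia.
lra.
Qed.

Lemma abc_row_load_leaf k : deg e k = 1%N -> row_load k < D - 1 / 2.
Proof.
move=> deg_k; have /card_gt0P[i] : (0 < #|nbr e k|)%N by rewrite card_nbr deg_k.
rewrite in_nbr => eki.
rewrite /abc_row_load deg_k (leaf_nbr deg_k eki) big_set1 /= invr1 mul1r.
by have := abc_load_le i; lra.
Qed.

Lemma abc_row_load_deg2 k : k != c -> deg e k = 2%N -> row_load k < D - 1 / 2.
Proof.
move=> kc deg_k; rewrite /abc_row_load deg_k /=.
have D3 := D_ge3.
have [c_nbr|cNnbr] := boolP (c \in nbr e k).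
  apply: (@le_lt_trans _ _ ((3 / 2)^-1 * ((2 - 1) * (5 / 4) + W c))); last first.
    by have := abc_load_center; lra.
  rewrite ler_pM2l ?invr_gt0 //; last lra.
  apply: le_trans (sum_le_but_one (B := 5 / 4 : R) c_nbr _) _; last by rewrite card_nbr deg_k.
  move=> j; rewrite in_nbr => ekj jc.
  by apply: abc_load_deg2_nbr_center deg_k ekj jc; rewrite e_sym -in_nbr.
have : \sum_(j in nbr e k) W j <= \sum_(j in nbr e k) (3 / 4 + 9 / 8 * ((deg e j).-1)%:R).
  apply: ler_sum => j; rewrite in_nbr => ekj.
  apply: (abc_load_deg2_nbr kc deg_k ekj).
  by apply: contraNneq cNnbr => <-; rewrite in_nbr.
rewrite big_split /= sumr_const card_nbr deg_k -mulr_sumr -natr_sum.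
have : (\sum_(j in k |: nbr e k) (deg e j).-1 <= 2)%N.
  by apply: excess_le; rewrite !inE negb_or eq_sym kc -in_nbr.
rewrite big_setU1 /= ?in_nbr ?e_irr // deg_k -(ler_nat R) natrD /=; lra.
Qed.

Lemma abc_row_load_deg3 k : k != c -> deg e k = 3%N -> row_load k < D - 1 / 2.
Proof.
move=> kc deg_k; have D3 := D_ge3.
have : \sum_(j in nbr e k) W j <= (#|nbr e k|%:R - 1) * (3 / 2) + (D - 2 / 3).
  apply: (sum_le_but_one_max (c := c)) => [||_|j]; rewrite ?card_nbr ?deg_k //.
  - lra.
  - exact: abc_load_le.
  rewrite in_nbr => ekj jc; have deg_j := deg3_nbr_leaf kc deg_k ekj jc.
  have ejk : e j k by rewrite e_sym.
  rewrite (abc_load_leaf deg_j ejk).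
  by rewrite /abc_term deg_k deg_j /abc_sq /=; lra.
rewrite /abc_row_load card_nbr deg_k /=; lra.
Qed.

Lemma abc_row_load_lt k : row_load k < D - 1 / 2.
Proof.
have [->|kc] := eqVneq k c; first exact: abc_row_load_center.
case: (deg_cases kc) => deg_k.
- exact: abc_row_load_leaf.
- exact: abc_row_load_deg2.
- exact: abc_row_load_deg3.
Qed.

End NearStarTree.

Theorem lemma3p4 (R : realType) (n : nat) (e : rel 'I_n) :
  (6 <= n)%N -> is_tree e -> max_deg e = (n - 3)%N ->
  forall a : R, eigenvalue (ABC_matrix R e) a -> a < Num.sqrt (n%:R - 7%:R / 2%:R).
Proof.
move=> n_ge6 e_tree max_deg_e a a_eig.
have [c deg_c] : exists c, deg e c = (n - 3)%N.
  by rewrite -max_deg_e; apply: max_deg_attained; lia.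
have [[e_sym _] _ _] := e_tree.
have a_sqr_lt : a ^+ 2 < (n - 3)%:R - 1 / 2.
  apply: (eigenvalue_sqr_lt (N := nbr e) (g := abc_weight \o deg e)) a_eig.
  - by move=> k j; rewrite in_nbr mxE => /negbTE->.
  - by move=> k; apply: abc_weight_gt0.
  - move=> k; rewrite (eq_bigr (abc_load e)) => [|j _].
      exact: abc_row_load_lt n_ge6 e_tree deg_c R k.
    exact: col_mass_ABC e_sym (tree_deg_gt0 n_ge6 e_tree).
have -> : n%:R - 7%:R / 2%:R = (n - 3)%:R - 1 / 2 :> R by rewrite natrB; [field | lia].
apply: le_lt_trans (ler_norm a) _; rewrite -sqrtr_sqr ltr_sqrt //.
by apply: le_lt_trans a_sqr_lt; apply: sqr_ge0.
Qed.
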